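(* Let $\mathcal K$ be a finitely complete 2-category with a good yoneda structure. Let $A$ be an admissible object, $f:A\to B$ an admissible 1-cell, $g:B\to\mathcal PA$ a 1-cell, and $\phi:y_A\Rightarrow gf$ a 2-cell. If $\phi$ exhibits $g$ as a left extension of $y_A$ along $f$, then this left extension is pointwise and $\phi$ exhibits $f$ as an absolute left lifting of $y_A$ along $g$.
   Context: For $f:A\to B$, $g:C\to B$ the lax pullback $f/g$ has projections $p:f/g\to A$, $q:f/g\to C$ and universal 2-cell $\lambda:fp\Rightarrow gq$. Given $f:A\to C$, $g:A\to B$, $h:B\to C$, a 2-cell $\phi:f\Rightarrow hg$ exhibits $h$ as a left extension of $f$ along $g$ if for every $k:B\to C$, $\kappa\mapsto(\kappa g)\cdot\phi$ is a bijection from 2-cells $h\Rightarrow k$ to 2-cells $f\Rightarrow kg$; it exhibits $g$ as a left lifting of $f$ along (through) $h$ if for every $k:A\to B$, $\kappa\mapsto(h\kappa)\cdot\phi$ is a bijection from 2-cells $g\Rightarrow k$ to 2-cells $f\Rightarrow hk$; this left lifting is absolute if $\phi j$ exhibits $gj$ as a left lifting of $fj$ along $h$ for all $j:D\to A$. $\phi$ exhibits $h$ as a pointwise left extension of $f$ along $g$ if for every $c:X\to B$, with lax pullback $p:g/c\to A$, $q:g/c\to X$, $\lambda:gp\Rightarrow cq$, the 2-cell $(h\lambda)\cdot(\phi p)$ exhibits $hc$ as a left extension of $fp$ along $q$. A good yoneda structure on a finitely complete 2-category consists of: a class of admissible 1-cells such that $fg$ is admissible whenever $f$ is; an object $A$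 is admissible when $1_A$ is; for each admissible object $A$ an object $\mathcal PA$ and an admissible $y_A:A\to\mathcal PA$; for each $f:A\to B$ with $A$, $f$ admissible, a 1-cell $B(f,1):B\to\mathcal PA$ and a 2-cell $\chi^f:y_A\Rightarrow B(f,1)f$; such that (i) $\chi^f$ exhibits $f$ as an absolute left lifting of $y_A$ through $B(f,1)$; (ii) whenever $A$, $f:A\to B$ are admissible and $\phi:y_A\Rightarrow gf$ exhibits $f$ as an absolute left lifting of $y_A$ along $g$, $\phi$ exhibits $g$ as a pointwise left extension of $y_A$ along $f$. *)

Record TwoCatData := {
  ob : Type;
  hom : ob -> ob -> Type;
  cell : forall A B : ob, hom A B -> hom A B -> Type;
  id1 : forall A : ob, hom A A;
  comp1 : forall A B C : ob, hom B C -> hom A B -> hom A C;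
  id2 : forall (A B : ob) (f : hom A B), cell A B f f;
  vcomp : forall (A B : ob) (f g h : hom A B),
      cell A B g h -> cell A B f g -> cell A B f h;
  hcomp : forall (A B C : ob) (f f' : hom A B) (g g' : hom B C),
      cell B C g g' -> cell A B f f' ->
      cell A C (comp1 A B C g f) (comp1 A B C g' f')
}.

Arguments ob : clear implicits.
Arguments hom {t} _ _.
Arguments cell {t A B} _ _.
Arguments id1 {t} _.
Arguments comp1 {t A B C} _ _.
Arguments id2 {t A B} _.
Arguments vcomp {t A B f g h} _ _.
Arguments hcomp {t A B C f f' g g'} _ _.

Definition castc {K : TwoCatData} {A B : ob K} {f f' g g' : hom A B}
  (ef : f = f') (eg : g = g') (a : cell f g) : cell f' g' :=
  match ef in _ = f1, eg in _ = g1 return cell f1 g1 with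
  | eq_refl, eq_refl => a
  end.

Record TwoCat := {
  tc :> TwoCatData;
  comp1_assoc : forall (A B C D : ob tc) (h : hom C D) (g : hom B C) (f : hom A B),
      comp1 h (comp1 g f) = comp1 (comp1 h g) f;
  comp1_id_l : forall (A B : ob tc) (f : hom A B), comp1 (id1 B) f = f;
  comp1_id_r : forall (A B : ob tc) (f : hom A B), comp1 f (id1 A) = f;
  vcomp_assoc : forall (A B : ob tc) (f g h k : hom A B)
      (c : cell h k) (b : cell g h) (a : cell f g),
      vcomp c (vcomp b a) = vcomp (vcomp c b) a;
  vcomp_id_l : forall (A B : ob tc) (f g : hom A B) (a : cell f g),
      vcomp (id2 g) a = a;
  vcomp_id_r : forall (A B : ob tc) (f g : hom A B) (a : cell f g),
      vcomp a (id2 f) = a;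
  hcomp_id2 : forall (A B C : ob tc) (f : hom A B) (g : hom B C),
      hcomp (id2 g) (id2 f) = id2 (comp1 g f);
  interchange : forall (A B C : ob tc) (f f' f'' : hom A B) (g g' g'' : hom B C)
      (b' : cell g' g'') (b : cell g g') (a' : cell f' f'') (a : cell f f'),
      hcomp (vcomp b' b) (vcomp a' a) = vcomp (hcomp b' a') (hcomp b a);
  hcomp_assoc : forall (A B C D : ob tc) (f f' : hom A B) (g g' : hom B C)
      (h h' : hom C D) (c : cell h h') (b : cell g g') (a : cell f f'),
      hcomp c (hcomp b a) =
      castc (eq_sym (comp1_assoc A B C D h g f))
            (eq_sym (comp1_assoc A B C D h' g' f')) (hcomp (hcomp c b) a);
  hcomp_id_l : forall (A B : ob tc) (f f' : hom A B) (a : cell f f'),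
      hcomp (id2 (id1 B)) a =
      castc (eq_sym (comp1_id_l A B f)) (eq_sym (comp1_id_l A B f')) a;
  hcomp_id_r : forall (A B : ob tc) (f f' : hom A B) (a : cell f f'),
      hcomp a (id2 (id1 A)) =
      castc (eq_sym (comp1_id_r A B f)) (eq_sym (comp1_id_r A B f')) a
}.

Arguments comp1_assoc {t A B C D} h g f.

Definition whiskerL {K : TwoCatData} {A B C : ob K} (h : hom B C) {f g : hom A B}
  (a : cell f g) : cell (comp1 h f) (comp1 h g) := hcomp (id2 h) a.
Definition whiskerR {K : TwoCatData} {A B C : ob K} {f g : hom B C}
  (a : cell f g) (j : hom A B) : cell (comp1 f j) (comp1 g j) := hcomp a (id2 j).

Definition bij {X Y : Type} (F : X -> Y) : Prop :=
  (forall x y, F x = F y -> x = y) /\ (forall b, exists a, F a = b).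

Definition is_left_extension {K : TwoCat} {A B C : ob K}
  (f : hom A C) (g : hom A B) (h : hom B C) (phi : cell f (comp1 h g)) : Prop :=
  forall k : hom B C, bij (fun kap : cell h k => vcomp (whiskerR kap g) phi).

Definition is_left_lifting {K : TwoCat} {A B C : ob K}
  (f : hom A C) (g : hom A B) (h : hom B C) (phi : cell f (comp1 h g)) : Prop :=
  forall k : hom A B, bij (fun kap : cell g k => vcomp (whiskerL h kap) phi).

Definition is_absolute_left_lifting {K : TwoCat} {A B C : ob K}
  (f : hom A C) (g : hom A B) (h : hom B C) (phi : cell f (comp1 h g)) : Prop :=
  forall (D : ob K) (j : hom D A),
    is_left_lifting (comp1 f j) (comp1 g j) h
      (castc eq_refl (eq_sym (comp1_assoc h g j)) (whiskerR phi j)).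

Definition lam_at {K : TwoCat} {A B C P X : ob K} {f : hom A B} {g : hom C B}
  {p : hom P A} {q : hom P C} (lam : cell (comp1 f p) (comp1 g q)) (u : hom X P)
  : cell (comp1 f (comp1 p u)) (comp1 g (comp1 q u)) :=
  castc (eq_sym (comp1_assoc f p u)) (eq_sym (comp1_assoc g q u)) (whiskerR lam u).

Definition is_lax_pullback {K : TwoCat} {A B C : ob K} (f : hom A B) (g : hom C B)
  {P : ob K} (p : hom P A) (q : hom P C) (lam : cell (comp1 f p) (comp1 g q)) : Prop :=
  (forall (X : ob K) (a : hom X A) (c : hom X C) (mu : cell (comp1 f a) (comp1 g c)),
     exists! u : hom X P, exists (ea : comp1 p u = a) (ec : comp1 q u = c),
       castc (f_equal (comp1 f) ea) (f_equal (comp1 g) ec) (lam_at lam u) = mu)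
  /\
  (forall (X : ob K) (u v : hom X P) (al : cell (comp1 p u) (comp1 p v))
          (be : cell (comp1 q u) (comp1 q v)),
     vcomp (whiskerL g be) (lam_at lam u) = vcomp (lam_at lam v) (whiskerL f al) ->
     exists! th : cell u v, whiskerL p th = al /\ whiskerL q th = be).

Definition is_pointwise_left_extension {K : TwoCat} {A B C : ob K}
  (f : hom A C) (g : hom A B) (h : hom B C) (phi : cell f (comp1 h g)) : Prop :=
  forall (X : ob K) (c : hom X B) (P : ob K) (p : hom P A) (q : hom P X)
         (lam : cell (comp1 g p) (comp1 c q)),
    is_lax_pullback g c p q lam ->
    is_left_extension (comp1 f p) q (comp1 h c)
      (castc eq_refl (comp1_assoc h c q)
         (vcomp (whiskerL h lam)
                (castc eq_refl (eq_sym (comp1_assoc h g p)) (whiskerR phi p)))).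

Definition is_terminal {K : TwoCat} (T : ob K) : Prop :=
  (forall X : ob K, exists! t : hom X T, True) /\
  (forall (X : ob K) (s t : hom X T), exists! th : cell s t, True).

Definition is_pullback {K : TwoCat} {A B C : ob K} (f : hom A B) (g : hom C B)
  {P : ob K} (p : hom P A) (q : hom P C) (E : comp1 f p = comp1 g q) : Prop :=
  let e := fun (X : ob K) (u : hom X P) =>
    eq_trans (comp1_assoc f p u)
      (eq_trans (f_equal (fun x => comp1 x u) E) (eq_sym (comp1_assoc g q u))) in
  (forall (X : ob K) (a : hom X A) (c : hom X C), comp1 f a = comp1 g c ->
     exists! u : hom X P, comp1 p u = a /\ comp1 q u = c)
  /\
  (forall (X : ob K) (u v : hom X P) (al : cell (comp1 p u) (comp1 p v))
          (be : cell (comp1 q u) (comp1 q v)),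
     castc (e X u) (e X v) (whiskerL f al) = whiskerL g be ->
     exists! th : cell u v, whiskerL p th = al /\ whiskerL q th = be).

(* Finite 2-limits are generated by the terminal object, pullbacks and
   cotensors with 2 (the latter being comma objects 1_B / 1_B); we take
   finite completeness to mean existence of terminal object, pullbacks and
   lax pullbacks. *)
Definition finitely_complete (K : TwoCat) : Prop :=
  (exists T : ob K, is_terminal T) /\
  (forall (A B C : ob K) (f : hom A B) (g : hom C B),
     exists (P : ob K) (p : hom P A) (q : hom P C) (E : comp1 f p = comp1 g q),
       is_pullback f g p q E) /\
  (forall (A B C : ob K) (f : hom A B) (g : hom C B),
     exists (P : ob K) (p : hom P A) (q : hom P C) (lam : cell (comp1 f p) (comp1 g q)),
       is_lax_pullback f g p q lam).

Record good_yoneda_structure (K : TwoCat) := {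
  admissible : forall A B : ob K, hom A B -> Prop;
  admissible_comp : forall (X A B : ob K) (f : hom A B) (g : hom X A),
      admissible A B f -> admissible X B (comp1 f g);
  PSh : ob K -> ob K;
  yon : forall A : ob K, hom A (PSh A);
  yon_admissible : forall A : ob K, admissible A A (id1 A) ->
      admissible A (PSh A) (yon A);
  Bf1 : forall (A B : ob K) (f : hom A B), hom B (PSh A);
  chi : forall (A B : ob K) (f : hom A B), cell (yon A) (comp1 (Bf1 A B f) f);
  yoneda_axiom_i : forall (A B : ob K) (f : hom A B),
      admissible A A (id1 A) -> admissible A B f ->
      is_absolute_left_lifting (yon A) f (Bf1 A B f) (chi A B f);
  yoneda_axiom_ii : forall (A B : ob K) (f : hom A B) (g : hom B (PSh A))
      (phi : cell (yon A) (comp1 g f)),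
      admissible A A (id1 A) -> admissible A B f ->
      is_absolute_left_lifting (yon A) f g phi ->
      is_pointwise_left_extension (yon A) f g phi
}.

Arguments admissible {K} _ {A B} _.
Arguments PSh {K} _ _.
Arguments yon {K} _ _.
Arguments Bf1 {K} _ {A B} _.
Arguments chi {K} _ {A B} _.

Definition admissible_ob {K : TwoCat} (Y : good_yoneda_structure K) (A : ob K) : Prop :=
  admissible Y (id1 A).

(* By axiom (i), [chi^f] exhibits [f] as an absolute left lifting of [y_A]
   through [B(f,1)], so by axiom (ii) [B(f,1)] is a pointwise left extension
   of [y_A] along [f].  Restricting its universal property on the comma object
   [f/1_B] along the diagonal [A -> f/1_B] yields [r : B(f,1) => g] with
   [(r f) . chi^f = phi]; since [phi] is a left extension, there is
   [s : g => B(f,1)] with [(s f) . phi = chi^f] and [r . s = 1_g].  Absolute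
   left liftings are stable under such retracts, so [phi] exhibits [f] as an
   absolute left lifting, and axiom (ii) then makes the extension pointwise. *)

From Stdlib Require Import Eqdep.

Definition ceq {K : TwoCat} {A B : ob K} {f g f' g' : hom A B}
  (a : cell f g) (b : cell f' g') : Prop :=
  exists (e1 : f = f') (e2 : g = g'), castc e1 e2 a = b.

Lemma ceq_eq {K : TwoCat} {A B : ob K} {f g : hom A B} (a b : cell f g) :
  ceq a b -> a = b.
Proof.
  intros [e1 [e2 H]]. rewrite (UIP_refl _ _ e1), (UIP_refl _ _ e2) in H. exact H.
Qed.

Lemma ceq_refl {K : TwoCat} {A B : ob K} {f g : hom A B} (a : cell f g) : ceq a a.
Proof. exists eq_refl, eq_refl. reflexivity. Qed.

Lemma ceq_sym {K : TwoCat} {A B : ob K} {f g f' g' : hom A B}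
  (a : cell f g) (b : cell f' g') : ceq a b -> ceq b a.
Proof. intros [e1 [e2 H]]. subst b. destruct e1, e2. apply ceq_refl. Qed.

Lemma ceq_trans {K : TwoCat} {A B : ob K} {f g f' g' f'' g'' : hom A B}
  (a : cell f g) (b : cell f' g') (c : cell f'' g'') : ceq a b -> ceq b c -> ceq a c.
Proof.
  intros [e1 [e2 H1]] [e3 [e4 H2]]. subst b c. destruct e1, e2, e3, e4. apply ceq_refl.
Qed.

Lemma ceq_castc {K : TwoCat} {A B : ob K} {f g f' g' : hom A B}
  (e1 : f = f') (e2 : g = g') (a : cell f g) : ceq (castc e1 e2 a) a.
Proof. destruct e1, e2. apply ceq_refl. Qed.

Lemma ceq_vcomp {K : TwoCat} {A B : ob K} {f g h f' g' h' : hom A B}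
  (b : cell g h) (a : cell f g) (b' : cell g' h') (a' : cell f' g') :
  ceq b b' -> ceq a a' -> ceq (vcomp b a) (vcomp b' a').
Proof.
  intros [e1 [e2 H1]] [e3 [e4 H2]]. subst b' a'. destruct e1, e2, e3.
  rewrite (UIP_refl _ _ e4). apply ceq_refl.
Qed.

Lemma ceq_whiskerL {K : TwoCat} {A B C : ob K} (h : hom B C) {f g f' g' : hom A B}
  (a : cell f g) (a' : cell f' g') : ceq a a' -> ceq (whiskerL h a) (whiskerL h a').
Proof. intros [e1 [e2 H]]. subst a'. destruct e1, e2. apply ceq_refl. Qed.

Lemma ceq_whiskerR {K : TwoCat} {A B C : ob K} {f g f' g' : hom B C}
  (a : cell f g) (a' : cell f' g') (j j' : hom A B) :
  ceq a a' -> j = j' -> ceq (whiskerR a j) (whiskerR a' j').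
Proof. intros [e1 [e2 H]] e. subst a' j'. destruct e1, e2. apply ceq_refl. Qed.

Lemma whiskerR_vcomp {K : TwoCat} {A B C : ob K} {f g h : hom B C}
  (b : cell g h) (a : cell f g) (j : hom A B) :
  whiskerR (vcomp b a) j = vcomp (whiskerR b j) (whiskerR a j).
Proof. unfold whiskerR. rewrite <- interchange, vcomp_id_l. reflexivity. Qed.

Lemma whiskerR_id2 {K : TwoCat} {A B C : ob K} (g : hom B C) (j : hom A B) :
  whiskerR (id2 g) j = id2 (comp1 g j).
Proof. apply hcomp_id2. Qed.

Lemma whiskerL_id2 {K : TwoCat} {A B C : ob K} (g : hom B C) (j : hom A B) :
  whiskerL g (id2 j) = id2 (comp1 g j).
Proof. apply hcomp_id2. Qed.

Lemma whisker_exchange {K : TwoCat} {A B C : ob K} {f f' : hom B C} {g g' : hom A B}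
  (b : cell f f') (a : cell g g') :
  vcomp (whiskerR b g') (whiskerL f a) = vcomp (whiskerL f' a) (whiskerR b g).
Proof.
  unfold whiskerR, whiskerL.
  rewrite <- !interchange, !vcomp_id_r, !vcomp_id_l. reflexivity.
Qed.

Lemma whiskerR_whiskerR {K : TwoCat} {A B C D : ob K} {f g : hom C D}
  (a : cell f g) (j : hom B C) (k : hom A B) :
  ceq (whiskerR (whiskerR a j) k) (whiskerR a (comp1 j k)).
Proof.
  unfold whiskerR. rewrite <- (hcomp_id2 K A B C k j).
  apply ceq_sym. rewrite hcomp_assoc. apply ceq_castc.
Qed.

Lemma whiskerR_whiskerL {K : TwoCat} {A B C D : ob K} (h : hom C D) {f g : hom B C}
  (a : cell f g) (j : hom A B) :
  ceq (whiskerR (whiskerL h a) j) (whiskerL h (whiskerR a j)).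
Proof.
  unfold whiskerR, whiskerL. apply ceq_sym. rewrite hcomp_assoc. apply ceq_castc.
Qed.

Lemma whiskerR_id1 {K : TwoCat} {A B : ob K} {f g : hom A B} (a : cell f g) :
  ceq (whiskerR a (id1 A)) a.
Proof. unfold whiskerR. rewrite hcomp_id_r. apply ceq_castc. Qed.

Lemma absolute_left_lifting_retract {K : TwoCat} {A B C : ob K}
  (y : hom A C) (f : hom A B) (g h : hom B C)
  (phi : cell y (comp1 g f)) (chi : cell y (comp1 h f)) (s : cell g h) (r : cell h g) :
  vcomp r s = id2 g -> vcomp (whiskerR s f) phi = chi ->
  is_absolute_left_lifting y f h chi -> is_absolute_left_lifting y f g phi.
Proof.
  intros rs_id s_phi Hchi D j k. specialize (Hchi D j k).
  set (phij := castc eq_refl (eq_sym (comp1_assoc g f j)) (whiskerR phi j)).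
  set (chij := castc eq_refl (eq_sym (comp1_assoc h f j)) (whiskerR chi j)) in Hchi.
  assert (s_transports : forall kap : cell (comp1 f j) k,
    vcomp (whiskerR s k) (vcomp (whiskerL g kap) phij) = vcomp (whiskerL h kap) chij).
  { intros kap. rewrite vcomp_assoc, whisker_exchange, <- vcomp_assoc. f_equal.
    apply ceq_eq. apply ceq_trans with (whiskerR (vcomp (whiskerR s f) phi) j).
    - rewrite whiskerR_vcomp. apply ceq_vcomp.
      + apply ceq_sym, whiskerR_whiskerR.
      + apply ceq_castc.
    - rewrite s_phi. apply ceq_sym, ceq_castc. }
  assert (r_retracts : forall psi : cell (comp1 y j) (comp1 g k),
    vcomp (whiskerR r k) (vcomp (whiskerR s k) psi) = psi).
  { intros psi. rewrite vcomp_assoc, <- whiskerR_vcomp, rs_id, whiskerR_id2.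
    apply vcomp_id_l. }
  split.
  - intros kap1 kap2 E. apply (proj1 Hchi). cbv beta in *.
    rewrite <- !s_transports, E. reflexivity.
  - intros psi. destruct (proj2 Hchi (vcomp (whiskerR s k) psi)) as [kap Hkap].
    exists kap. cbv beta in *.
    rewrite <- (r_retracts (vcomp (whiskerL g kap) phij)), s_transports, Hkap.
    apply r_retracts.
Qed.

Lemma left_extension_section {K : TwoCat} {A B C : ob K}
  (y : hom A C) (f : hom A B) (g h : hom B C)
  (phi : cell y (comp1 g f)) (chi : cell y (comp1 h f)) (r : cell h g) :
  is_left_extension y f g phi -> vcomp (whiskerR r f) chi = phi ->
  exists s : cell g h, vcomp r s = id2 g /\ vcomp (whiskerR s f) phi = chi.
Proof.
  intros Hext r_chi. destruct (proj2 (Hext h) chi) as [s s_phi]. cbv beta in s_phi.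
  exists s; split; [| exact s_phi].
  apply (proj1 (Hext g)). cbv beta.
  rewrite whiskerR_vcomp, <- vcomp_assoc, s_phi, r_chi, whiskerR_id2, vcomp_id_l.
  reflexivity.
Qed.

Lemma lax_pullback_diagonal {K : TwoCat} {A B P : ob K} (f : hom A B)
  (p : hom P A) (q : hom P B) (lam : cell (comp1 f p) (comp1 (id1 B) q)) :
  is_lax_pullback f (id1 B) p q lam ->
  exists i : hom A P,
    comp1 p i = id1 A /\ comp1 q i = f /\ ceq (whiskerR lam i) (id2 f).
Proof.
  intros Hpb.
  destruct (proj1 Hpb A (id1 A) f
     (castc (eq_sym (comp1_id_r _ _ _ f)) (eq_sym (comp1_id_l _ _ _ f)) (id2 f)))
    as [i [[pi_id [qi_f lam_i]] _]].
  exists i; split; [exact pi_id | split; [exact qi_f |]].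
  apply ceq_trans with (lam_at lam i); [apply ceq_sym, ceq_castc |].
  apply ceq_trans with (castc (f_equal (comp1 f) pi_id) (f_equal (comp1 (id1 B)) qi_f)
                              (lam_at lam i)); [apply ceq_sym, ceq_castc |].
  rewrite lam_i. apply ceq_castc.
Qed.

Section CommaPasting.

Context {K : TwoCat} {A B C P : ob K} {y : hom A C} {f : hom A B}
  {p : hom P A} {q : hom P B} (lam : cell (comp1 f p) (comp1 (id1 B) q)).

(* Convertible with the 2-cell in [is_pointwise_left_extension] for [c := 1_B]. *)
Definition comma_paste (k : hom B C) (psi : cell y (comp1 k f))
  : cell (comp1 y p) (comp1 (comp1 k (id1 B)) q) :=
  castc eq_refl (comp1_assoc k (id1 B) q)
    (vcomp (whiskerL k lam) (castc eq_refl (eq_sym (comp1_assoc k f p)) (whiskerR psi p))).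

Lemma comma_paste_diagonal {i : hom A P} {k : hom B C} (psi : cell y (comp1 k f)) :
  comp1 p i = id1 A -> ceq (whiskerR lam i) (id2 f) ->
  ceq (whiskerR (comma_paste k psi) i) psi.
Proof.
  intros pi_id lam_i.
  eapply ceq_trans; [eapply ceq_whiskerR; [apply ceq_castc | reflexivity] |].
  rewrite whiskerR_vcomp.
  apply ceq_trans with (vcomp (id2 (comp1 k f)) psi); [| rewrite vcomp_id_l; apply ceq_refl].
  apply ceq_vcomp.
  - eapply ceq_trans; [apply whiskerR_whiskerL |].
    rewrite <- whiskerL_id2. apply ceq_whiskerL, lam_i.
  - eapply ceq_trans; [eapply ceq_whiskerR; [apply ceq_castc | reflexivity] |].
    eapply ceq_trans; [apply whiskerR_whiskerR |].
    eapply ceq_trans; [eapply ceq_whiskerR; [apply ceq_refl | exact pi_id] |].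
    apply whiskerR_id1.
Qed.

End CommaPasting.

Lemma pointwise_left_extension_factorization {K : TwoCat} {A B C P : ob K}
  (y : hom A C) (f : hom A B) (h : hom B C) (chi : cell y (comp1 h f))
  (p : hom P A) (q : hom P B) (lam : cell (comp1 f p) (comp1 (id1 B) q)) :
  is_lax_pullback f (id1 B) p q lam ->
  is_pointwise_left_extension y f h chi ->
  forall (k : hom B C) (psi : cell y (comp1 k f)),
    exists r : cell h k, vcomp (whiskerR r f) chi = psi.
Proof.
  intros Hpb Hpw k psi.
  destruct (lax_pullback_diagonal f p q lam Hpb) as [i [pi_id [qi_f lam_i]]].
  destruct (proj2 (Hpw B (id1 B) P p q lam Hpb (comp1 k (id1 B)))
                  (comma_paste lam k psi)) as [t Ht].
  exists (castc (comp1_id_r _ _ _ h) (comp1_id_r _ _ _ k) t).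
  apply ceq_eq.
  apply ceq_trans with (whiskerR (comma_paste lam k psi) i);
    [| exact (comma_paste_diagonal lam psi pi_id lam_i)].
  rewrite <- Ht, whiskerR_vcomp. apply ceq_vcomp.
  - apply ceq_trans with (whiskerR t (comp1 q i)).
    + apply ceq_whiskerR; [apply ceq_castc | symmetry; exact qi_f].
    + apply ceq_sym, whiskerR_whiskerR.
  - apply ceq_sym, (comma_paste_diagonal lam chi pi_id lam_i).
Qed.

Theorem lemma3p2 (K : TwoCat) (HK : finitely_complete K)
  (Y : good_yoneda_structure K) (A B : ob K) (f : hom A B)
  (g : hom B (PSh Y A)) (phi : cell (yon Y A) (comp1 g f)) :
  admissible_ob Y A -> admissible Y f ->
  is_left_extension (yon Y A) f g phi ->
  is_pointwise_left_extension (yon Y A) f g phi /\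
  is_absolute_left_lifting (yon Y A) f g phi.
Proof.
  intros HA Hf Hext.
  destruct HK as [_ [_ Hcomma]].
  destruct (Hcomma A B B f (id1 B)) as [P [p [q [lam Hpb]]]].
  pose proof (yoneda_axiom_i K Y A B f HA Hf) as Hchi.
  pose proof (yoneda_axiom_ii K Y A B f (Bf1 Y f) (chi Y f) HA Hf Hchi) as Hchi_pw.
  destruct (pointwise_left_extension_factorization _ f _ _ p q lam Hpb Hchi_pw g phi)
    as [r r_chi].
  destruct (left_extension_section _ f g _ phi (chi Y f) r Hext r_chi) as [s [rs_id s_phi]].
  assert (Hphi : is_absolute_left_lifting (yon Y A) f g phi)
    by exact (absolute_left_lifting_retract _ f g _ phi (chi Y f) s r rs_id s_phi Hchi).
  split; [exact (yoneda_axiom_ii K Y A B f g phi HA Hf Hphi) | exact Hphi].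
Qed.
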